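(* Let $R,R'\subseteq\Lambda$ be two (not necessarily disjoint) rectangles and $RR'=R\cup R'$. Then $$\mathbb E^0_{RR'}=\mathbb E^0_R\circ\mathbb E^0_{R'},\qquad\mathcal P^\star_{RR'}=\mathcal P^\star_R\circ\mathcal P^\star_{R'},\qquad\mathcal P^\square_{RR'}=\mathcal P^\square_R\circ\mathcal P^\square_{R'},$$ where for $V\subseteq\Lambda$, $\mathcal P^\star_V=\prod_{s\in\mathcal S_V}\mathcal P^\star_s$, $\mathcal P^\square_V=\prod_{p\in\mathcal P_V}\mathcal P^\square_p$, and $\mathbb E^0_{RR'}$ is understood as $\mathcal P^\star_{RR'}\circ\mathcal P^\square_{RR'}\circ\frac{\mathrm{Tr}_{RR'}}{d_{RR'}}$ when $RR'$ is not a rectangle.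
   Context: Model: Let $G$ be a finite Abelian group with identity $1$, write $\bar g=g^{-1}$, and let $\hat G$ be its character group, with $\bar\chi$ the complex-conjugate character. For $N\ge2$, $\Lambda=\Lambda_N$ is the set of edges of the square lattice on the torus $\mathbb Z_N\times\mathbb Z_N$; horizontal edges are oriented to the left, vertical edges downward. Each edge $e$ carries $\mathcal H_e=\ell^2(G)$ with orthonormal basis $\{|g\rangle\}_{g\in G}$; for $V\subseteq\Lambda$, $\mathcal H_V=\bigotimes_{e\in V}\mathcal H_e$, $d_V=\dim\mathcal H_V$, $\mathcal B(\mathcal H_V)$ is identified with $\mathcal B(\mathcal H_V)\otimes 1_{\Lambda\setminus V}$, and $\frac{\mathrm{Tr}_V}{d_V}$ denotes $O\mapsto 1_V\otimes\frac1{d_V}\mathrm{Tr}_V(O)$. On $\ell^2(G)$ let $L^g=\sum_{h}|gh\rangle\langle h|$, $M^\chi=\sum_g\chi(g)|g\rangle\langle g|$; subscript $e$ indicates the edge. For a star (vertex) $s$, $ds$ is its four incident edges, $d_+s$ ($d_-s$) those pointing away from (towards) it; for a plaquette (face) $p$, $\partial p$ its four boundary edges, $\partial_+p$ ($\partial_-p$) those oriented counterclockwise (clockwise). $A_s(g)=\prod_{e\in d_+s}L^g_e\prod_{e\in d_-s}L^{\bar g}_e$, $B_p(\chi)=\prod_{e\in\partial_+p}M^\chi_e\prod_{e\in\partial_-p}M^{\bar\chi}_e$, $A_s(\chi)=\frac1{|G|}\sum_g\chi(g)A_s(g)$, $B_p(h)=\frac1{|G|}\sum_\chi\chi(h)B_p(\chi)$.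 For $V\subseteq\Lambda$, $\mathcal S_V$ (resp. $\mathcal P_V$) is the set of stars (resp. plaquettes) whose edge set meets $V$. Pinchings: $\mathcal P(P)(O)=POP+(1-P)O(1-P)$, $\mathcal P^\star_s=\prod_{\chi\in\hat G}\mathcal P(A_s(\chi))$, $\mathcal P^\square_p=\prod_{h\in G}\mathcal P(B_p(h))$. A rectangle is the set of all edges with both endpoints in a region $\{a,\dots,a+l_1\}\times\{b,\dots,b+l_2\}\subseteq\mathbb Z_N^2$, $0<l_1,l_2<N$. For a rectangle $R$, $\mathbb E^0_R=\lim_{t\to\infty}e^{t\mathcal L^{(0)}_R}$ is the infinite-temperature Davies conditional expectation, which equals $\mathcal P^\star_R\circ\mathcal P^\square_R\circ\frac{\mathrm{Tr}_R}{d_R}$. *)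

From HB Require Import structures.
From mathcomp Require Import all_boot all_order all_algebra all_fingroup all_solvable all_field all_character.
Set Implicit Arguments. Unset Strict Implicit. Unset Printing Implicit Defensive.
Import GRing.Theory Num.Theory.
Local Open Scope ring_scope.

Section Toric.
Variable N : nat.

(* vertices of the torus Z_N x Z_N; first coordinate increases to the right,
   second coordinate increases upwards *)
Definition vertex := ('Z_N * 'Z_N)%type.
(* edge (v,false): horizontal edge between v and v+(1,0);
   edge (v,true) : vertical edge between v and v+(0,1) *)
Definition edge := (vertex * bool)%type.

Definition e1 (v : vertex) : vertex := (v.1 + 1, v.2).
Definition e2 (v : vertex) : vertex := (v.1, v.2 + 1).

(* horizontal edges oriented to the left, vertical edges downward *)
Definition etail (e : edge) : vertex := if e.2 then e2 e.1 else e1 e.1.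
Definition ehead (e : edge) : vertex := e.1.

Definition dplus (s : vertex) : {set edge} := [set e | etail e == s].
Definition dminus (s : vertex) : {set edge} := [set e | ehead e == s].
Definition dstar (s : vertex) : {set edge} := dplus s :|: dminus s.

(* plaquette labelled by its lower-left corner p *)
Definition pbottom (p : vertex) : edge := (p, false).
Definition ptop (p : vertex) : edge := (e2 p, false).
Definition pleft (p : vertex) : edge := (p, true).
Definition pright (p : vertex) : edge := (e1 p, true).
(* counterclockwise / clockwise oriented boundary edges *)
Definition bplus (p : vertex) : {set edge} := [set ptop p; pleft p].
Definition bminus (p : vertex) : {set edge} := [set pbottom p; pright p].
Definition bdry (p : vertex) : {set edge} := bplus p :|: bminus p.

Definition starsOf (V : {set edge}) : {set vertex} :=
  [set s | [exists e in V, e \in dstar s]].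
Definition plaqsOf (V : {set edge}) : {set vertex} :=
  [set p | [exists e in V, e \in bdry p]].

Definition inRegion (a b : 'Z_N) (l1 l2 : nat) (w : vertex) : bool :=
  (val (w.1 - a)%R <= l1)%N && (val (w.2 - b)%R <= l2)%N.
Definition rectangle (R : {set edge}) : Prop :=
  exists (a b : 'Z_N) (l1 l2 : nat),
    [/\ (0 < l1 < N)%N, (0 < l2 < N)%N &
        R = [set e | inRegion a b l1 l2 (etail e) && inRegion a b l1 l2 (ehead e)]].

Variable gT : finGroupType.

(* basis configurations |c> of H_Lambda = tensor of l^2(G) over all edges *)
Definition conf := {ffun edge -> gT}.
(* operators on H_Lambda, given by their matrix elements <x|O|y> *)
Definition op := conf -> conf -> algC.

Definition opmul (A B : op) : op := fun x y => \sum_(z : conf) A x z * B z y.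
Definition op1 : op := fun x y => (x == y)%:R.
Definition opsub (A B : op) : op := fun x y => A x y - B x y.

Definition pinch (P : op) (O : op) : op :=
  fun x y => opmul (opmul P O) P x y
           + opmul (opmul (opsub op1 P) O) (opsub op1 P) x y.

Definition compseq (fs : seq (op -> op)) : op -> op :=
  foldr (fun f acc => f \o acc) id fs.

(* characters of G: the irreducible (= linear, G abelian) characters *)
Definition chr (i : Iirr [set: gT]%G) (g : gT) : algC := (tnth (irr [set: gT]%G) i) g.

(* A_s(g) = prod_{d_+ s} L^g prod_{d_- s} L^{g^-1} *)
Definition starAct (s : vertex) (g : gT) (c : conf) : conf :=
  [ffun e => if e \in dplus s then (g * c e)%g
             else if e \in dminus s then (g^-1 * c e)%g else c e].
Definition Astar_g (s : vertex) (g : gT) : op := fun x y => (x == starAct s g y)%:R.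

(* B_p(chi) = prod_{d_+ p} M^chi prod_{d_- p} M^{conj chi} *)
Definition Bsq_chi (p : vertex) (i : Iirr [set: gT]%G) : op := fun x y =>
  (x == y)%:R * (chr i (x (ptop p)) * chr i (x (pleft p))
                 * (chr i (x (pbottom p)))^* * (chr i (x (pright p)))^*).

Definition Astar (s : vertex) (i : Iirr [set: gT]%G) : op := fun x y =>
  (#|gT|%:R)^-1 * \sum_(g : gT) chr i g * Astar_g s g x y.
Definition Bsq (p : vertex) (h : gT) : op := fun x y =>
  (#|gT|%:R)^-1 * \sum_(i : Iirr [set: gT]%G) chr i h * Bsq_chi p i x y.

Definition Pstar_s (s : vertex) : op -> op :=
  compseq [seq pinch (Astar s i) | i <- enum 'I_(Nirr [set: gT]%G)].
Definition Psq_p (p : vertex) : op -> op :=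
  compseq [seq pinch (Bsq p h) | h <- enum gT].

Definition PstarV (V : {set edge}) : op -> op :=
  compseq [seq Pstar_s s | s <- enum (starsOf V)].
Definition PsqV (V : {set edge}) : op -> op :=
  compseq [seq Psq_p p | p <- enum (plaqsOf V)].

(* normalized partial trace Tr_V/d_V : O |-> 1_V (x) d_V^-1 Tr_V(O) *)
Definition merge (V : {set edge}) (z c : conf) : conf :=
  [ffun e => if e \in V then z e else c e].
Definition ptr (V : {set edge}) (O : op) : op := fun x y =>
  [forall e in V, x e == y e]%:R *
  ((#|gT|%:R ^+ #|V|)^-1 *
   \sum_(z : conf | [forall e in ~: V, z e == 1%g]) O (merge V z x) (merge V z y)).

Definition E0 (V : {set edge}) : op -> op := PstarV V \o PsqV V \o ptr V.

End Toric.

From Pilot Require Import Defs.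
From HB Require Import structures.
From mathcomp Require Import all_boot all_order all_algebra all_fingroup all_solvable all_field all_character.
From Stdlib Require Import FunctionalExtensionality.
From mathcomp Require Import ring.
Set Implicit Arguments. Unset Strict Implicit. Unset Printing Implicit Defensive.
Import GRing.Theory Num.Theory.
Local Open Scope ring_scope.

(* Since G is abelian, the A_s(chi) (resp. the B_p(h)) are orthogonal
   projections summing to the identity, so the pinching P^star_s is the twirl
   O |-> |G|^-1 sum_g A_s(g) O A_s(g)^-1, and P^square_p is the dephasing that
   kills the matrix elements between configurations of different flux through
   p.  Twirls and dephasings are commuting idempotents, hence composing them
   over the stars (plaquettes) of R and of R' is composing them over those of
   R u R'.  Partial traces satisfy Tr_R o Tr_R' = Tr_(R u R'), commute with
   twirls and with dephasings at plaquettes away from R, while for a plaquette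
   p touching R the dephasing at p applied after Tr_R absorbs the one applied
   before it. *)

Lemma opext N gT (A B : op N gT) : (forall x y, A x y = B x y) -> A = B.
Proof. by move=> AB; do 2![apply: functional_extensionality => ?]; apply: AB. Qed.

Lemma opmul_diag_l N gT (d : conf N gT -> algC) (O : op N gT) x y :
  opmul (fun x y => (x == y)%:R * d x) O x y = d x * O x y.
Proof.
rewrite /opmul (bigD1 x) //= eqxx mul1r big1 ?addr0 // => u /negbTE.
by rewrite eq_sym => ->; rewrite !mul0r.
Qed.

Lemma opmul_diag_r N gT (d : conf N gT -> algC) (O : op N gT) x y :
  opmul O (fun x y => (x == y)%:R * d x) x y = O x y * d y.
Proof.
rewrite /opmul (bigD1 y) //= eqxx mul1r big1 ?addr0 // => u /negbTE ->.
by rewrite mul0r mulr0.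
Qed.

Lemma sumr_delta (T : finType) (v : T) (F : T -> algC) :
  \sum_u F u * (u == v)%:R = F v.
Proof.
rewrite (bigD1 v) //= eqxx mulr1 big1 ?addr0 // => u /negbTE ->.
by rewrite mulr0.
Qed.

Section Characters.
Variable gT : finGroupType.
Hypothesis hab : abelian [set: gT].

Lemma mulgC_ab (g h : gT) : (g * h = h * g)%g.
Proof. exact: (centsP hab) g (in_setT g) h (in_setT h). Qed.

Lemma card_neq0 : (#|gT|%:R : algC) != 0.
Proof. by rewrite pnatr_eq0 -lt0n -cardsT (cardG_gt0 [set: gT]%G). Qed.

Lemma chrM (i : Iirr [set: gT]%G) (g h : gT) :
  chr i (g * h)%g = chr i g * chr i h.
Proof. by rewrite /chr (lin_charM (char_abelianP _ hab i)) ?inE. Qed.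

Lemma chrV (i : Iirr [set: gT]%G) (g : gT) : chr i g^-1%g = (chr i g)^*.
Proof. by rewrite /chr char_inv // irr_char. Qed.

Lemma chr1 (i : Iirr [set: gT]%G) : chr i 1%g = 1.
Proof. by rewrite /chr (lin_char1 (char_abelianP _ hab i)). Qed.

Lemma sum_chr (g : gT) : \sum_i chr i g = #|gT|%:R * (g == 1%g)%:R.
Proof.
have := second_orthogonality_relation g (group1 [set: gT]%G).
rewrite class1G inE.
under eq_bigr => i _ do rewrite -/(chr i 1%g) chr1 conjC1 mulr1.
move=> ->; case: eqP => [->|_]; last by rewrite mulr0.
by rewrite mulr1 cent11T setTI cardsT.
Qed.

Lemma sum_chr_chrV (i j : Iirr [set: gT]%G) :
  \sum_h chr i h^-1%g * chr j h = #|gT|%:R * (i == j)%:R.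
Proof.
have := cfdot_irr j i; rewrite cfdotE cardsT eq_sym => dot_ji.
rewrite -dot_ji mulrA mulfV ?card_neq0 // mul1r.
by apply: eq_big => [h|h _]; rewrite ?inE // chrV mulrC.
Qed.

End Characters.

Section PinchResolution.
Variables (R : pzRingType) (I : eqType) (P : I -> R).

Definition pinchr (p o : R) := p * o * p + (1 - p) * o * (1 - p).

Lemma foldr_pinchr (l : seq I) (O : R) : uniq l ->
  (forall i j, i \in l -> j \in l -> P i * P j = if i == j then P i else 0) ->
  foldr (fun i o => pinchr (P i) o) O l =
  \sum_(i <- l) P i * O * P i +
  (1 - \sum_(i <- l) P i) * O * (1 - \sum_(i <- l) P i).
Proof.
elim: l => [|i l IHl] /=; first by rewrite !big_nil add0r subr0 mulr1 mul1r.
move=> /andP[il ul] orthP.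
rewrite IHl //; last by move=> a b al bl; apply: orthP; rewrite inE ?al ?bl orbT.
have orth_i j : j \in l -> P i * P j = 0 /\ P j * P i = 0.
  move=> jl; have /negbTE ij : i != j by apply: contraNneq il => ->.
  by rewrite !orthP ?inE ?jl ?eqxx ?orbT // ij eq_sym ij.
rewrite !big_cons /pinchr.
set S := \sum_(j <- l) P j; set A := \sum_(j <- l) P j * O * P j.
have PS : P i * S = 0 by rewrite mulr_sumr big1_seq // => j /andP[_ /orth_i[]].
have SP : S * P i = 0 by rewrite mulr_suml big1_seq // => j /andP[_ /orth_i[]].
have PQ : P i * (1 - S) = P i by rewrite mulrBr PS subr0 mulr1.
have QP : (1 - S) * P i = P i by rewrite mulrBl SP subr0 mul1r.
have QQ1 : (1 - P i) * (1 - S) = 1 - (P i + S).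
  by rewrite mulrBl mul1r PQ opprD addrA addrAC.
have QQ2 : (1 - S) * (1 - P i) = 1 - (P i + S).
  by rewrite mulrBr mulr1 QP opprD addrA addrAC.
have PAP : P i * A * P i = 0.
  rewrite mulr_sumr mulr_suml big1_seq // => j /andP[_ /orth_i[Pij _]].
  by rewrite !mulrA Pij !mul0r.
have QAQ : (1 - P i) * A * (1 - P i) = A.
  rewrite mulr_sumr mulr_suml; apply: eq_big_seq => j /orth_i[Pij Pji].
  rewrite !mulrA mulrBl mul1r Pij subr0 -!mulrA mulrBr mulr1 Pji subr0.
  by rewrite !mulrA.
rewrite (mulrDr (P i)) (mulrDl _ _ (P i)) (mulrDr (1 - P i)).
rewrite (mulrDl _ _ (1 - P i)) PAP QAQ add0r addrA.
by rewrite !mulrA PQ QQ1 -!mulrA QP QQ2.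
Qed.

End PinchResolution.

Section OperatorMatrix.
Variables (N : nat) (gT : finGroupType).
Local Notation opT := (op N gT).
Local Notation n := #|conf N gT|.

(* [op] carries no ring structure: products of pinchings are computed on the
   matrices indexed by an enumeration of the configurations. *)
Definition opmx (A : opT) : 'M[algC]_n :=
  \matrix_(i, j) A (enum_val i) (enum_val j).

Lemma opmxK (A : opT) x y : opmx A (enum_rank x) (enum_rank y) = A x y.
Proof. by rewrite mxE !enum_rankK. Qed.

Lemma opmx_inj (A B : opT) : opmx A = opmx B -> A = B.
Proof. by move=> AB; apply: opext => x y; rewrite -!opmxK AB. Qed.

Lemma opmx_mul (A B : opT) : opmx (opmul A B) = opmx A *m opmx B.
Proof.
apply/matrixP => i j; rewrite !mxE /opmul.
rewrite (reindex (fun k : 'I_n => enum_val k)) /=; last first.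
  by exists enum_rank => k _; rewrite ?enum_valK ?enum_rankK.
by apply: eq_bigr => k _; rewrite !mxE.
Qed.

Lemma opmx1 : opmx (@op1 N gT) = 1%:M.
Proof.
by apply/matrixP => i j; rewrite !mxE /op1 (inj_eq (can_inj enum_valK)).
Qed.

Lemma opmxB (A B : opT) : opmx (opsub A B) = opmx A - opmx B.
Proof. by apply/matrixP => i j; rewrite !mxE. Qed.

Lemma opmx_pinch (P O : opT) : opmx (pinch P O) = pinchr (opmx P) (opmx O).
Proof.
rewrite /pinchr -[1]/(1%:M : 'M_n) -opmx1 -!opmxB -!mulmxE -!opmx_mul.
by apply/matrixP => i j; rewrite !mxE.
Qed.

Lemma opmx_sum (J : Type) (l : seq J) (F : J -> opT) :
  opmx (fun x y => \sum_(i <- l) F i x y) = \sum_(i <- l) opmx (F i).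
Proof.
apply/matrixP => i j; rewrite !mxE summxE.
by apply: eq_bigr => k _; rewrite mxE.
Qed.

Lemma opmx_compseq (J : Type) (l : seq J) (P : J -> opT) (O : opT) :
  opmx (compseq [seq pinch (P i) | i <- l] O) =
  foldr (fun i o => pinchr (opmx (P i)) o) (opmx O) l.
Proof. by elim: l => [|i l IHl] //=; rewrite opmx_pinch IHl. Qed.

Lemma compseq_pinch_resolution (J : finType) (P : J -> opT) (O : opT) :
  (forall i j x y, opmul (P i) (P j) x y = (i == j)%:R * P i x y) ->
  (forall x y, \sum_i P i x y = op1 x y) ->
  compseq [seq pinch (P i) | i <- enum J] O =
  fun x y => \sum_i opmul (opmul (P i) O) (P i) x y.
Proof.
move=> orthP sumP; apply: opmx_inj.
have sum1 : \sum_(i <- enum J) opmx (P i) = 1.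
  rewrite -opmx_sum -[1]/(1%:M : 'M_n) -opmx1; congr opmx.
  by apply: opext => x y; rewrite big_enum sumP.
rewrite opmx_compseq (@foldr_pinchr _ _ (opmx \o P)) ?enum_uniq //; last first.
  move=> i j _ _; rewrite -mulmxE -opmx_mul; case: eqP => [<-|ne].
    by congr opmx; apply: opext => x y; rewrite orthP eqxx mul1r.
  by apply/matrixP => a b; rewrite !mxE orthP (introF eqP ne) mul0r.
rewrite sum1 subrr mul0r mulr0 addr0.
rewrite opmx_sum big_enum /=.
by apply: eq_bigr => i _; rewrite !opmx_mul !mulmxE.
Qed.

End OperatorMatrix.

Section Twirl.
Variables (N : nat) (gT : finGroupType).
Hypothesis hab : abelian [set: gT].
Local Notation conf := (conf N gT).
Local Notation opT := (op N gT).
Implicit Types (s t : vertex N) (g h : gT).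

Definition starShift (s : vertex N) (g : gT) (e : edge N) : gT :=
  if e \in dplus s then g else if e \in dminus s then g^-1%g else 1%g.

Lemma starActE s g (c : conf) e : starAct s g c e = (starShift s g e * c e)%g.
Proof. by rewrite /starAct /starShift ffunE; do 2!case: ifP => //; rewrite mul1g. Qed.

Lemma starShiftM s g h e :
  starShift s (g * h) e = (starShift s g e * starShift s h e)%g.
Proof.
rewrite /starShift; do 2!case: ifP => // _; last by rewrite mulg1.
by rewrite invMg mulgC_ab.
Qed.

Lemma starActM s g h (c : conf) :
  starAct s g (starAct s h c) = starAct s (g * h) c.
Proof. by apply/ffunP => e; rewrite !starActE starShiftM mulgA. Qed.

Lemma starAct1 s (c : conf) : starAct s 1 c = c.
Proof.
apply/ffunP => e; rewrite starActE /starShift.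
by case: ifP => _; [|case: ifP => _]; rewrite ?invg1 mul1g.
Qed.

Lemma starActK s g : cancel (starAct s g) (starAct s g^-1).
Proof. by move=> c; rewrite starActM mulVg starAct1. Qed.

Lemma starActKV s g : cancel (starAct s g^-1) (starAct s g).
Proof. by move=> c; rewrite starActM mulgV starAct1. Qed.

Lemma eq_starAct s g (x u : conf) :
  (x == starAct s g u) = (u == starAct s g^-1 x).
Proof. by apply/eqP/eqP => ->; rewrite ?starActK ?starActKV. Qed.

Lemma starActC s t g h (c : conf) :
  starAct s g (starAct t h c) = starAct t h (starAct s g c).
Proof.
by apply/ffunP => e; rewrite !starActE !mulgA (mulgC_ab hab (starShift s g e)).
Qed.

Definition twirl (s : vertex N) (O : opT) : opT := fun x y =>
  (#|gT|%:R)^-1 * \sum_g O (starAct s g x) (starAct s g y).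

Lemma Astar_orth s i j (x y : conf) :
  opmul (Astar s i) (Astar s j) x y = (i == j)%:R * Astar s i x y.
Proof.
rewrite /opmul /Astar /Astar_g.
under eq_bigr do rewrite mulrACA.
rewrite -mulr_sumr.
have -> : \sum_(z : conf) (\sum_g chr i g * (x == starAct s g z)%:R) *
        (\sum_h chr j h * (z == starAct s h y)%:R) =
     \sum_g \sum_h chr i g * chr j h * (x == starAct s (g * h) y)%:R.
  under eq_bigr do rewrite mulr_suml.
  rewrite exchange_big; apply: eq_bigr => g _.
  under eq_bigr do rewrite mulr_sumr.
  rewrite exchange_big; apply: eq_bigr => h _.
  rewrite (bigD1 (starAct s h y)) //= eqxx mulr1 starActM big1 ?addr0.
    by rewrite mulrAC.
  by move=> z /negbTE ->; rewrite !mulr0.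
rewrite exchange_big.
under eq_bigr => h _.
  rewrite (reindex_inj (mulIg h^-1%g)).
  under eq_bigr => g _ do rewrite mulgKV chrM // -(mulrA (chr i g)) mulrAC.
  rewrite -mulr_suml.
  over.
rewrite -mulr_sumr sum_chr_chrV //.
by field; rewrite card_neq0.
Qed.

Lemma sum_Astar s (x y : conf) : \sum_i Astar s i x y = op1 x y.
Proof.
rewrite /Astar /Astar_g -mulr_sumr exchange_big.
under eq_bigr => g _ do rewrite -mulr_suml sum_chr // mulrAC.
by rewrite sumr_delta starAct1 mulrA mulVf ?card_neq0 ?mul1r.
Qed.

Lemma opmul_Astar_l s i (O : opT) x y :
  opmul (Astar s i) O x y =
  (#|gT|%:R)^-1 * \sum_g chr i g * O (starAct s g^-1 x) y.
Proof.
rewrite /opmul /Astar /Astar_g.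
under eq_bigr do rewrite -mulrA mulr_suml.
rewrite -mulr_sumr exchange_big; congr (_ * _); apply: eq_bigr => g _.
under eq_bigr do rewrite eq_starAct mulrAC.
by rewrite sumr_delta.
Qed.

Lemma opmul_Astar_r s i (O : opT) x y :
  opmul O (Astar s i) x y =
  (#|gT|%:R)^-1 * \sum_h chr i h * O x (starAct s h y).
Proof.
rewrite /opmul /Astar /Astar_g.
under eq_bigr do rewrite mulrCA mulr_sumr.
rewrite -mulr_sumr exchange_big; congr (_ * _); apply: eq_bigr => h _.
under eq_bigr do rewrite mulrCA mulrA.
by rewrite sumr_delta.
Qed.

Lemma Pstar_sE s : Pstar_s s = twirl s.
Proof.
apply: functional_extensionality => O.
rewrite /Pstar_s compseq_pinch_resolution; last 2 first.
- exact: Astar_orth.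
- exact: sum_Astar.
apply: opext => x y.
under eq_bigr do rewrite opmul_Astar_r.
under eq_bigr do under eq_bigr do rewrite opmul_Astar_l mulrCA mulr_sumr.
under eq_bigr do rewrite -mulr_sumr mulrA.
rewrite -mulr_sumr exchange_big.
under eq_bigr do rewrite exchange_big.
under eq_bigr => h _ do under eq_bigr => g _ do
  (rewrite (eq_bigr (fun i => chr i (h * g)%g * O (starAct s g^-1 x) (starAct s h y)));
   last by move=> i _; rewrite chrM // mulrA).
under eq_bigr => h _ do under eq_bigr => g _ do
  rewrite -mulr_suml sum_chr // -eq_invg_mul eq_sym mulrAC.
under eq_bigr => h _ do rewrite sumr_delta invgK.
by rewrite /twirl -mulr_sumr !mulrA mulfVK ?card_neq0.
Qed.

Lemma twirlC s t (O : opT) : twirl s (twirl t O) = twirl t (twirl s O).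
Proof.
apply: opext => x y; rewrite /twirl -!mulr_sumr mulrCA; congr (_ * (_ * _)).
rewrite exchange_big; apply: eq_bigr => h _; apply: eq_bigr => g _.
by rewrite !(starActC s t).
Qed.

Lemma twirl_id s (O : opT) : twirl s (twirl s O) = twirl s O.
Proof.
apply: opext => x y; rewrite /twirl -mulr_sumr.
have shift h : \sum_g O (starAct s (g * h) x) (starAct s (g * h) y) =
               \sum_g O (starAct s g x) (starAct s g y).
  by rewrite [RHS](reindex_inj (mulIg h)).
under eq_bigr => h _ do under eq_bigr => g _ do rewrite !starActM.
under eq_bigr => h _ do rewrite shift.
by rewrite sumr_const -[(\sum_g _) *+ _]mulr_natr [_ * #|_|%:R]mulrC mulKf ?card_neq0.
Qed.

End Twirl.

Section Dephasing.
Variables (N : nat) (gT : finGroupType).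
Hypothesis hab : abelian [set: gT].
Local Notation conf := (conf N gT).
Local Notation opT := (op N gT).
Implicit Types (p : vertex N) (s : vertex N) (g h : gT).

Definition flux p (c : conf) : gT :=
  (c (ptop p) * c (pleft p) * (c (pbottom p))^-1 * (c (pright p))^-1)%g.

Definition dephase p (O : opT) : opT := fun x y =>
  (flux p x == flux p y)%:R * O x y.

Definition mulc (d c : conf) : conf := [ffun e => (d e * c e)%g].

Lemma flux_mulc p (d c : conf) : flux p (mulc d c) = (flux p d * flux p c)%g.
Proof.
have mulgACA (a b a' b' : gT) : (a * b * (a' * b') = a * a' * (b * b'))%g.
  by rewrite -!mulgA (mulgA b) (mulgC_ab hab b a') -!mulgA.
rewrite /flux !ffunE !invMg.
set d1 := d (ptop p); set d2 := d (pleft p); set d3 := d (pbottom p).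
set d4 := d (pright p); set c1 := c (ptop p); set c2 := c (pleft p).
set c3 := c (pbottom p); set c4 := c (pright p).
rewrite (mulgC_ab hab c3^-1) (mulgC_ab hab c4^-1) (mulgACA d1 c1 d2 c2).
by rewrite (mulgACA (d1 * d2)%g (c1 * c2)%g) (mulgACA (d1 * d2 * d3^-1)%g).
Qed.

Lemma eq_flux_mulc p (d x y : conf) :
  (flux p (mulc d x) == flux p (mulc d y)) = (flux p x == flux p y).
Proof. by rewrite !flux_mulc (inj_eq (mulgI _)). Qed.

Lemma eq_flux_starAct p s g (x y : conf) :
  (flux p (starAct s g x) == flux p (starAct s g y)) = (flux p x == flux p y).
Proof.
have starAct_mulc c : starAct s g c = mulc [ffun e => starShift s g e] c.
  by apply/ffunP => e; rewrite starActE !ffunE.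
by rewrite !starAct_mulc eq_flux_mulc.
Qed.

Lemma BsqE p h : Bsq p h = fun x y => (x == y)%:R * (h * flux p x == 1)%g%:R.
Proof.
apply: opext => x y; rewrite /Bsq.
have chr_flux i : Bsq_chi p i x y = (x == y)%:R * chr i (flux p x).
  by rewrite /Bsq_chi /flux -!chrV // !chrM.
under eq_bigr do rewrite chr_flux mulrCA -chrM //.
by rewrite -mulr_sumr sum_chr // mulrCA mulKf ?card_neq0.
Qed.

Lemma Bsq_orth p h h' (x y : conf) :
  opmul (Bsq p h) (Bsq p h') x y = (h == h')%:R * Bsq p h x y.
Proof.
rewrite [Bsq p h]BsqE opmul_diag_l !BsqE /=.
have [_|] := eqVneq x y; last by rewrite !mul0r !mulr0.
have [<-|neq_h] := eqVneq h h'; first by rewrite !mul1r -natrM mulnb andbb.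
rewrite mul0r mul1r -natrM mulnb; apply/eqP; rewrite pnatr_eq0 eqb0.
apply: contra neq_h => /andP[/eqP hx /eqP h'x].
by apply/eqP/(mulIg (flux p x)); rewrite hx h'x.
Qed.

Lemma sum_Bsq p (x y : conf) : \sum_h Bsq p h x y = op1 x y.
Proof.
under eq_bigr do rewrite BsqE -eq_invg_mul eq_invg_sym.
rewrite -mulr_sumr (bigD1 (flux p x)^-1%g) //= eqxx big1 ?addr0 ?mulr1 //.
by move=> h /negbTE ->.
Qed.

Lemma Psq_pE p : Psq_p p = dephase p.
Proof.
apply: functional_extensionality => O.
rewrite /Psq_p compseq_pinch_resolution; last 2 first.
- exact: Bsq_orth.
- exact: sum_Bsq.
apply: opext => x y; rewrite /dephase.
under eq_bigr do rewrite BsqE opmul_diag_r opmul_diag_l -eq_invg_mul eq_invg_sym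
  mulrC mulrA -natrM mulnb.
rewrite -mulr_suml (bigD1 (flux p x)^-1%g) //= eqxx big1 ?addr0.
  by rewrite andbT -eq_invg_mul invgK.
by move=> h /negbTE ->; rewrite andbF.
Qed.

Lemma dephaseC p q (O : opT) : dephase p (dephase q O) = dephase q (dephase p O).
Proof. by apply: opext => x y; rewrite /dephase mulrCA. Qed.

Lemma dephase_id p (O : opT) : dephase p (dephase p O) = dephase p O.
Proof. by apply: opext => x y; rewrite /dephase mulrA -natrM mulnb andbb. Qed.

End Dephasing.

Lemma eqffun_prod (E T : finType) (f g : {ffun E -> T}) :
  ((f == g)%:R : algC) = \prod_e (f e == g e)%:R.
Proof.
have [->|neq_fg] := eqVneq f g; first by rewrite big1 // => e _; rewrite eqxx.
have [e neq_e] : exists e, f e != g e.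
  apply/existsP; move: neq_fg; apply: contraNT; rewrite negb_exists => /forallP eq_fg.
  by apply/eqP/ffunP => e; apply/eqP; rewrite -[_ == _]negbK eq_fg.
by rewrite (bigD1 e) //= (negbTE neq_e) mul0r.
Qed.

Lemma prod_natb (E : finType) (P : pred E) (b : E -> bool) :
  \prod_(e | P e) ((b e)%:R : algC) = [forall (e | P e), b e]%:R.
Proof.
case: forallP => [all_b|not_all].
  by rewrite big1 // => e /(implyP (all_b e)) ->.
have [e /andP[Pe /negbTE nbe]] : exists e, P e && ~~ b e.
  apply/existsP; apply: contraT; rewrite negb_exists => /forallP nb.
  by case: not_all => e; apply/implyP => Pe; move: (nb e); rewrite Pe /= negbK.
by rewrite (bigD1 e) //= nbe mul0r.
Qed.

Section PartialTrace.
Variables (N : nat) (gT : finGroupType).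
Local Notation conf := (conf N gT).
Local Notation opT := (op N gT).
Local Notation n := (#|gT|%:R : algC).
Implicit Types (A B V : {set edge N}) (O : opT).

Definition agree V (x y : conf) := [forall e in V, x e == y e].

(* [ptr V] with the summation extended to all configurations z: only the
   values of z on V matter, so this costs a factor |G|^|~: V|. *)
Definition ptr_avg V O : opT := fun x y =>
  (agree V x y)%:R * ((n ^+ #|{: edge N}|)^-1 *
   \sum_(z : conf) O (Defs.merge V z x) (Defs.merge V z y)).

Definition conf1 : conf := [ffun _ => 1%g].

Lemma sum_eq_merge1 V (w : conf) :
  \sum_(z : conf) ((w == Defs.merge V z conf1)%:R : algC) =
  [forall e in ~: V, w e == 1%g]%:R * n ^+ #|~: V|.
Proof.
under eq_bigr do rewrite eqffun_prod.
under eq_bigr do under eq_bigr do rewrite !ffunE.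
rewrite -(bigA_distr_bigA (fun e t => ((w e == if e \in V then t else 1%g)%:R : algC))).
rewrite (bigID (mem V)) /= big1 ?mul1r => [|e eV]; last first.
  rewrite eV (bigD1 (w e)) //= eqxx big1 ?addr0 // => t /negbTE.
  by rewrite eq_sym => ->.
under eq_bigr => e /negbTE eV do rewrite eV sumr_const -[(_ *+ _) *+ _]mulr_natr.
rewrite big_split /= prod_natb prodr_const; congr (_%:R * _ ^+ _).
  by congr (nat_of_bool _); apply: eq_forallb => e; rewrite inE.
by apply: eq_card => e; rewrite !inE.
Qed.

Lemma sum_merge1 V (F : conf -> algC) :
  \sum_(z : conf) F (Defs.merge V z conf1) =
  n ^+ #|~: V| * \sum_(z : conf | [forall e in ~: V, z e == 1%g]) F z.
Proof.
transitivity (\sum_(w : conf) \sum_(z : conf) F w * (w == Defs.merge V z conf1)%:R).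
  by rewrite exchange_big; apply: eq_bigr => z _; rewrite sumr_delta.
under eq_bigr => w _ do rewrite -mulr_sumr sum_eq_merge1.
rewrite mulr_sumr [in RHS]big_mkcond /=; apply: eq_bigr => w _.
by case: ifP => _; rewrite ?mul1r ?mul0r ?mulr0 // mulrC.
Qed.

Lemma merge_mergel V (z c c' : conf) :
  Defs.merge V (Defs.merge V z c') c = Defs.merge V z c.
Proof. by apply/ffunP => e; rewrite !ffunE; case: (e \in V). Qed.

Lemma ptrE V : ptr V = ptr_avg V.
Proof.
apply: functional_extensionality => O; apply: opext => x y.
rewrite /ptr /ptr_avg; congr (_ * _).
have -> : \sum_(z : conf) O (Defs.merge V z x) (Defs.merge V z y) =
  \sum_(z : conf) (fun w => O (Defs.merge V w x) (Defs.merge V w y))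
                   (Defs.merge V z conf1).
  by apply: eq_bigr => z _; rewrite !merge_mergel.
rewrite (sum_merge1 V (fun w => O (Defs.merge V w x) (Defs.merge V w y))).
rewrite mulrA; congr (_ * _).
by rewrite -(cardsC V) exprD invfM -mulrA mulVf ?mulr1 // expf_neq0 // card_neq0.
Qed.

Lemma agree_merge A B (x y z : conf) : agree A x y ->
  agree B (Defs.merge A z x) (Defs.merge A z y) = agree (A :|: B) x y.
Proof.
move=> /forallP agreeA; apply/forallP/forallP => agree_e e.
- apply/implyP; rewrite inE => /orP[eA|eB]; first exact: (implyP (agreeA e)).
  move: (implyP (agree_e e) eB); rewrite !ffunE; case: ifP => // eA _.
  exact: (implyP (agreeA e)).
- apply/implyP => eB; rewrite !ffunE; case: ifP => // _.
  by apply: (implyP (agree_e e)); rewrite inE eB orbT.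
Qed.

Lemma agree_setUl A B (x y : conf) : agree (A :|: B) x y -> agree A x y.
Proof.
move=> /forallP agreeAB; apply/forallP => e; apply/implyP => eA.
by apply: (implyP (agreeAB e)); rewrite inE eA.
Qed.

Lemma merge_setU A B (x z w : conf) :
  Defs.merge B w (Defs.merge A z x) = Defs.merge (A :|: B) (Defs.merge B w z) x.
Proof. by apply/ffunP => e; rewrite !ffunE inE; case: (e \in B); case: (e \in A). Qed.

(* (z, w) |-> (merge B w z, merge B z w) is an involution of conf * conf. *)
Lemma sum_merge_pairs B (F : conf -> algC) :
  \sum_(z : conf) \sum_(w : conf) F (Defs.merge B w z) =
  n ^+ #|{: edge N}| * \sum_(u : conf) F u.
Proof.
pose swap (zw : conf * conf) := (Defs.merge B zw.2 zw.1, Defs.merge B zw.1 zw.2).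
have swapK : involutive swap.
  by move=> [z w]; congr (_, _); apply/ffunP => e; rewrite !ffunE; case: (e \in B).
transitivity (\sum_(zw : conf * conf) F zw.1).
  by rewrite pair_bigA [RHS](reindex_inj (inv_inj swapK)).
rewrite -(pair_bigA _ (fun u _ => F u)) /= mulr_sumr; apply: eq_bigr => u _.
by rewrite sumr_const card_ffun -[F u *+ _]mulr_natl natrX.
Qed.

Lemma ptr_avgU A B O : ptr_avg A (ptr_avg B O) = ptr_avg (A :|: B) O.
Proof.
apply: opext => x y; rewrite /ptr_avg.
have [agreeA|disagreeA] := boolP (agree A x y); last first.
  by rewrite (contraNF (@agree_setUl A B x y) disagreeA) !mul0r.
rewrite mul1r.
under eq_bigr => z _ do rewrite (agree_merge _ _ agreeA).
under eq_bigr => z _ do under eq_bigr => w _ do rewrite !merge_setU.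
rewrite -mulr_sumr -mulr_sumr.
rewrite (sum_merge_pairs B
  (fun u => O (Defs.merge (A :|: B) u x) (Defs.merge (A :|: B) u y))).
by rewrite mulrCA mulKf // expf_neq0 // card_neq0.
Qed.

End PartialTrace.

Section Commutation.
Variables (N : nat) (gT : finGroupType).
Hypothesis hab : abelian [set: gT].
Local Notation conf := (conf N gT).
Local Notation opT := (op N gT).
Implicit Types (A : {set edge N}) (s p : vertex N) (g : gT) (O : opT).

Lemma eq_flux_merge A p (x y z : conf) : agree A x y ->
  (flux p (Defs.merge A z x) == flux p (Defs.merge A z y)) = (flux p x == flux p y).
Proof.
move=> agreeA.
pose d : conf := [ffun e => if e \in A then (z e * (x e)^-1)%g else 1%g].
have merge_d (c : conf) : agree A x c -> Defs.merge A z c = mulc d c.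
  move=> /forallP agree_c; apply/ffunP => e; rewrite !ffunE.
  case: ifPn => [eA|_]; last by rewrite mul1g.
  by move/eqP: (implyP (agree_c e) eA) <-; rewrite mulgKV.
have agree_xx : agree A x x by apply/forallP => e; apply/implyP.
by rewrite (merge_d x) // (merge_d y) // eq_flux_mulc.
Qed.

Lemma flux_merge_out A p (x z : conf) : p \notin plaqsOf A ->
  flux p (Defs.merge A z x) = flux p x.
Proof.
move=> pA.
have merge_bdry e : e \in bdry p -> Defs.merge A z x e = x e.
  move=> ep; rewrite ffunE ifN //; apply: contra pA => eA.
  by rewrite inE; apply/existsP; exists e; rewrite eA.
by rewrite /flux !merge_bdry // !inE eqxx ?orbT.
Qed.

Lemma starAct_merge A s g (z x : conf) :
  starAct s g (Defs.merge A z x) = Defs.merge A (starAct s g z) (starAct s g x).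
Proof. by apply/ffunP => e; rewrite !(starActE, ffunE); case: (e \in A). Qed.

Lemma agree_starAct A s g (x y : conf) :
  agree A (starAct s g x) (starAct s g y) = agree A x y.
Proof. by apply: eq_forallb => e; rewrite !starActE (inj_eq (mulgI _)). Qed.

Lemma twirl_ptr_avg A s O : ptr_avg A (twirl s O) = twirl s (ptr_avg A O).
Proof.
apply: opext => x y; rewrite /ptr_avg /twirl.
under eq_bigr => z _ do under eq_bigr => g _ do rewrite !starAct_merge.
have shift g : \sum_(z : conf) O (Defs.merge A (starAct s g z) (starAct s g x))
                                 (Defs.merge A (starAct s g z) (starAct s g y)) =
               \sum_(z : conf) O (Defs.merge A z (starAct s g x))
                                 (Defs.merge A z (starAct s g y)).
  by rewrite [RHS](reindex_inj (can_inj (starActK hab s g))).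
rewrite -mulr_sumr exchange_big (eq_bigr _ (fun g _ => shift g)).
under [in RHS]eq_bigr => g _ do rewrite agree_starAct.
by rewrite -[in RHS]mulr_sumr [in RHS]mulrCA -mulr_sumr [_^-1 * _]mulrCA.
Qed.

Lemma dephase_ptr_avg_dephase A p O :
  dephase p (ptr_avg A (dephase p O)) = dephase p (ptr_avg A O).
Proof.
apply: opext => x y; rewrite /dephase /ptr_avg.
have [agreeA|] := boolP (agree A x y); last by rewrite !mul0r !mulr0.
have [eq_flux|] := boolP (flux p x == flux p y); last by rewrite !mul0r.
congr (_ * (_ * (_ * _))); apply: eq_bigr => z _.
by rewrite eq_flux_merge // eq_flux mul1r.
Qed.

Lemma ptr_avg_dephase A p O : p \notin plaqsOf A ->
  ptr_avg A (dephase p O) = dephase p (ptr_avg A O).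
Proof.
move=> pA; apply: opext => x y; rewrite /dephase /ptr_avg.
under eq_bigr => z _ do rewrite !flux_merge_out //.
by rewrite -mulr_sumr; ring.
Qed.

Lemma twirl_dephase s p O : twirl s (dephase p O) = dephase p (twirl s O).
Proof.
apply: opext => x y; rewrite /twirl /dephase.
under eq_bigr => g _ do rewrite (eq_flux_starAct hab).
by rewrite -mulr_sumr mulrCA.
Qed.

End Commutation.

Section CommutingIdempotents.
Variables (X : Type) (I : eqType) (T : I -> X -> X).

Definition comp_seq (s : seq I) : X -> X :=
  foldr (fun f acc => f \o acc) id [seq T i | i <- s].

Lemma comp_seq_cons i s x : comp_seq (i :: s) x = T i (comp_seq s x).
Proof. by []. Qed.

Lemma comp_seq_cat s1 s2 x :
  comp_seq (s1 ++ s2) x = comp_seq s1 (comp_seq s2 x).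
Proof. by elim: s1 => //= i s1 IHs; rewrite -!/(comp_seq _) !comp_seq_cons IHs. Qed.

Lemma comp_seq_commute (f : X -> X) s :
  {in s, forall i x, f (T i x) = T i (f x)} ->
  forall x, f (comp_seq s x) = comp_seq s (f x).
Proof.
elim: s => //= i s IHs fT x; rewrite -!/(comp_seq _) !comp_seq_cons.
by rewrite fT ?mem_head // IHs // => j js; apply: fT; rewrite inE js orbT.
Qed.

Hypothesis TC : forall i j x, T i (T j x) = T j (T i x).
Hypothesis Tid : forall i x, T i (T i x) = T i x.

Lemma comp_seqC s1 s2 x : comp_seq s1 (comp_seq s2 x) = comp_seq s2 (comp_seq s1 x).
Proof.
elim: s1 x => //= i s1 IHs x; rewrite -!/(comp_seq _) !comp_seq_cons IHs.
by apply: comp_seq_commute => j _ y; apply: TC.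
Qed.

Lemma comp_seq_absorb i s x : i \in s -> T i (comp_seq s x) = comp_seq s x.
Proof.
elim: s => //= j s IHs; rewrite -!/(comp_seq _) !comp_seq_cons inE.
by case/orP => [/eqP->|i_s]; rewrite ?Tid // TC IHs.
Qed.

Lemma comp_seq_undup s x : comp_seq (undup s) x = comp_seq s x.
Proof.
elim: s x => //= i s IHs x; rewrite -!/(comp_seq _).
by case: ifP => i_s; rewrite !comp_seq_cons IHs // comp_seq_absorb.
Qed.

Lemma comp_seq_perm s1 s2 : perm_eq s1 s2 -> comp_seq s1 =1 comp_seq s2.
Proof.
move=> s12.
apply: (@catCA_perm_ind _ (fun s => forall x, comp_seq s1 x = comp_seq s x) _ _ _ s12)
  => //.
by move=> a b c abc x; rewrite abc !comp_seq_cat comp_seqC.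
Qed.

End CommutingIdempotents.

Lemma comp_seq_setU (X : Type) (I : finType) (T : I -> X -> X) :
  (forall i j x, T i (T j x) = T j (T i x)) -> (forall i x, T i (T i x) = T i x) ->
  forall (A B : {set I}) x,
  comp_seq T (enum (A :|: B)) x = comp_seq T (enum A) (comp_seq T (enum B) x).
Proof.
move=> TC Tid A B x; rewrite -comp_seq_cat -(comp_seq_undup TC Tid (enum A ++ enum B)).
apply: comp_seq_perm => //; apply: uniq_perm; rewrite ?enum_uniq ?undup_uniq // => i.
by rewrite mem_undup mem_cat !mem_enum inE.
Qed.

Lemma meets_setU (T U : finType) (F : U -> {set T}) (A B : {set T}) :
  [set u | [exists e in A :|: B, e \in F u]] =
  [set u | [exists e in A, e \in F u]] :|: [set u | [exists e in B, e \in F u]].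
Proof.
apply/setP => u; rewrite !inE; apply/existsP/orP.
- move=> [e /andP[]]; rewrite inE => /orP[eA|eB] eF.
  + by left; apply/existsP; exists e; rewrite eA.
  + by right; apply/existsP; exists e; rewrite eB.
- by move=> [] /existsP[e /andP[eX eF]]; exists e; rewrite inE eX ?orbT.
Qed.

Section UnionLaws.
Variables (N : nat) (gT : finGroupType).
Hypothesis hab : abelian [set: gT].
Implicit Types (A B V : {set edge N}) (O : op N gT).
Local Notation twirls V := (comp_seq (@twirl N gT) (enum (starsOf V))).
Local Notation dephases V := (comp_seq (@dephase N gT) (enum (plaqsOf V))).

Lemma PstarVE V : PstarV V = twirls V.
Proof. by rewrite /PstarV (eq_map (Pstar_sE hab)). Qed.

Lemma PsqVE V : PsqV V = dephases V.
Proof. by rewrite /PsqV (eq_map (Psq_pE hab)). Qed.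

Lemma PstarVU A B O : PstarV (A :|: B) O = PstarV A (PstarV B O).
Proof.
rewrite !PstarVE /starsOf meets_setU comp_seq_setU //.
- exact: twirlC.
- exact: twirl_id.
Qed.

Lemma PsqVU A B O : PsqV (A :|: B) O = PsqV A (PsqV B O).
Proof.
rewrite !PsqVE /plaqsOf meets_setU comp_seq_setU //.
- exact: dephaseC.
- exact: dephase_id.
Qed.

Lemma dephases_ptr_avg_dephase A p O :
  dephases A (ptr_avg A (dephase p O)) = dephase p (dephases A (ptr_avg A O)).
Proof.
have dephasesC X : dephases A (dephase p X) = dephase p (dephases A X).
  by apply: esym; apply: comp_seq_commute => q _ Y; apply: dephaseC.
have [pA|pNA] := boolP (p \in plaqsOf A); last first.
  by rewrite ptr_avg_dephase // dephasesC.
have absorb X : dephases A (dephase p X) = dephases A X.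
  by rewrite dephasesC comp_seq_absorb ?mem_enum //; [exact: dephaseC | exact: dephase_id].
by rewrite -[LHS]absorb dephase_ptr_avg_dephase // dephasesC.
Qed.

(* In E_A o E_B = P*_A P#_A Tr_A P*_B P#_B Tr_B the twirls of B move left
   past Tr_A and P#_A, then the dephasings of B move left past P#_A Tr_A. *)
Lemma E0U A B O : E0 (A :|: B) O = E0 A (E0 B O).
Proof.
rewrite /E0 /= PstarVU PsqVU !PstarVE !PsqVE !ptrE -ptr_avgU.
rewrite (comp_seq_commute (f := ptr_avg A)) => [|s _ X]; last exact: twirl_ptr_avg.
rewrite [in RHS](comp_seq_commute (f := dephases A)) => [|s _ X]; last first.
  by apply: esym; apply: comp_seq_commute => p _ Y; apply: twirl_dephase.
rewrite (comp_seq_commute (f := fun X => dephases A (ptr_avg A X))) => [|p _ X].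
  by rewrite (comp_seqC (@dephaseC N gT) (enum (plaqsOf B))).
by rewrite /= dephases_ptr_avg_dephase.
Qed.

End UnionLaws.

Theorem mainTheorem12 (N : nat) (gT : finGroupType)
  (hN : (1 < N)%N) (hab : abelian [set: gT])
  (R R' : {set edge N}) (hR : rectangle R) (hR' : rectangle R') :
  [/\ (forall (O : op N gT) x y, E0 (R :|: R') O x y = E0 R (E0 R' O) x y),
      (forall (O : op N gT) x y, PstarV (R :|: R') O x y = PstarV R (PstarV R' O) x y)
    & (forall (O : op N gT) x y, PsqV (R :|: R') O x y = PsqV R (PsqV R' O) x y)].
Proof.
split=> O x y.
- by rewrite E0U.
- by rewrite PstarVU.
- by rewrite PsqVU.
Qed.
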